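(* In $G=BS(1,2)$, let $c_0(n)$ be the number of conjugacy classes of $G$ contained in the subgroup $\mathbb{Z}[1/2]$ whose length with respect to $\{a,t\}$ is $n$. Then the growth rate $\limsup_n c_0(n)^{1/n}$ of these conjugacy classes is approximately $1.348$.
   Context: $BS(1,2)=\langle a,t\mid tat^{-1}=a^2\rangle\cong \mathbb{Z}[1/2]\rtimes\mathbb{Z}$ via $a\mapsto(1,0)$, $t\mapsto(0,1)$; $\mathbb{Z}[1/2]=\{(x,0)\}$. The length of a conjugacy class is the minimal word length of its elements; the growth rate is the reciprocal of the radius of convergence of $\sum c_0(n)z^n$. *)

From Stdlib Require Import Reals ZArith List ClassicalEpsilon.
From Coquelicot Require Import Coquelicot.
Open Scope R_scope.

(** BS(1,2) = Z[1/2] ⋊ Z, with (x,k)(y,l) = (x + 2^k y, k + l);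
    a = (1,0), t = (0,1).  Z[1/2] is modelled as the dyadic reals. *)
Definition dyadic (x : R) : Prop := exists (m : Z) (k : nat), x = IZR m / 2 ^ k.

Definition BS : Type := (R * Z)%type.

Definition inG (g : BS) : Prop := dyadic (fst g).

Definition bs_mul (g h : BS) : BS :=
  (fst g + powerRZ 2 (snd g) * fst h, (snd g + snd h)%Z).
Definition bs_inv (g : BS) : BS :=
  (- (powerRZ 2 (- snd g) * fst g), (- snd g)%Z).
Definition bs_one : BS := (0, 0%Z).

Definition gen_a : BS := (1, 0%Z).
Definition gen_t : BS := (0, 1%Z).

Definition gens : list BS := gen_a :: bs_inv gen_a :: gen_t :: bs_inv gen_t :: nil.

Definition eval_word (w : list BS) : BS := fold_right bs_mul bs_one w.

Definition in_ball (n : nat) (g : BS) : Prop :=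
  exists w : list BS, (List.length w <= n)%nat /\ List.Forall (fun s => List.In s gens) w /\ eval_word w = g.

Definition conjG (g g' : BS) : Prop :=
  inG g /\ exists h : BS, inG h /\ bs_mul (bs_mul h g) (bs_inv h) = g'.

Definition in_Z12 (g : BS) : Prop := inG g /\ snd g = 0%Z.

Definition class_in_Z12 (g : BS) : Prop :=
  inG g /\ forall g', conjG g g' -> in_Z12 g'.

Definition class_length_is (g : BS) (n : nat) : Prop :=
  (exists g', conjG g g' /\ in_ball n g') /\
  (forall g' m, conjG g g' -> in_ball m g' -> (n <= m)%nat).

Definition is_c0 (n m : nat) : Prop :=
  exists reps : list BS,
    List.length reps = m /\
    (forall g, List.In g reps -> class_in_Z12 g /\ class_length_is g n) /\
    (forall i j, (i < m)%nat -> (j < m)%nat ->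
       conjG (List.nth i reps bs_one) (List.nth j reps bs_one) -> i = j) /\
    (forall g, class_in_Z12 g -> class_length_is g n ->
       exists r, List.In r reps /\ conjG g r).

Definition c0 (n : nat) : nat := epsilon (inhabits 0%nat) (is_c0 n).

Definition c0_root (n : nat) : R :=
  if Nat.eqb (c0 n) 0 then 0 else Rpower (INR (c0 n)) (/ INR n).

Definition c0_growth_rate : Rbar := LimSup_seq c0_root.

From Stdlib Require Import Reals.
From Coquelicot Require Import Coquelicot.
Open Scope R_scope.
From Stdlib Require Import ZArith Lia Lra List ClassicalEpsilon Classical.
Import ListNotations.

(* A class of G inside Z[1/2] consists of the elements (2^k x, 0), so it is
   determined by an odd integer V, and the length of the class is governed by
   how cheaply V can be written in base 2 with digits -1, 0, 1.

   Upper bound: reading a word of length n for (V / 2^p, 0) letter by letter,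
   with t-exponents in [-p, q], expands V with digit cost at most n - 2(p + q)
   at depth p + q.  Integers of digit cost at most k at depth L are generated
   through the non-adjacent form V = 2 (2 z) ± 1, and there are O(k x^(2L+k))
   of them as soon as x^5 >= x^3 + 2; hence c_0(n) = O(n^2 1.3482^n).

   Lower bound: the odd integers 1, 2 V - ε (for V = ε mod 4) and 4 U ± 1,
   built from shorter V, U by a t-conjugation and one letter a^±1, are pairwise
   non-conjugate, and their number f(n) at length n satisfies
   f(n + 5) = f(n + 3) + 2 f(n), so f(n) >= 1.3477^(n - 5).  The partial sums of
   c_0 dominate f, so c_0(n)^(1/n) cannot stay below 1.3475.

   Both constants bracket the real root 1.3480 of x^5 = x^3 + 2. *)

(** * The digit cost of an integer *)

Section DigitCost.
Local Open Scope Z_scope.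

(* [dcost V L] is the least value of [Σ |ε_i| + |r|] over all expansions
   [V = Σ_(i<L) ε_i 2^i + 2^L r] with digits [ε_i ∈ {-1, 0, 1}]: the number of
   letters [a^±1] needed to write [V] with [t]-conjugations of depth [L]. *)
Fixpoint dcost (V : Z) (L : nat) : Z :=
  match L with
  | O => Z.abs V
  | S L' => if Z.even V then dcost (V / 2) L'
            else 1 + Z.min (dcost ((V - 1) / 2) L') (dcost ((V + 1) / 2) L')
  end.

Lemma dcost_double u L : dcost (2 * u) (S L) = dcost u L.
Proof.
  cbn [dcost]. rewrite Z.even_even. f_equal. Z.div_mod_to_equations. lia.
Qed.

Lemma dcost_double_add1 u L :
  dcost (2 * u + 1) (S L) = 1 + Z.min (dcost u L) (dcost (u + 1) L).
Proof.
  cbn [dcost]. rewrite Z.even_odd.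
  replace ((2 * u + 1 - 1) / 2) with u by (Z.div_mod_to_equations; lia).
  replace ((2 * u + 1 + 1) / 2) with (u + 1) by (Z.div_mod_to_equations; lia).
  reflexivity.
Qed.

Lemma dcost_nonneg L : forall V, 0 <= dcost V L.
Proof.
  induction L as [|L IH]; intros V; [cbn [dcost]; lia|].
  destruct (Z.Even_or_Odd V) as [[u ->]|[u ->]].
  - rewrite dcost_double. apply IH.
  - rewrite dcost_double_add1. pose proof (IH u). pose proof (IH (u + 1)). lia.
Qed.

Lemma dcost_succ L : forall V,
  dcost (V + 1) L <= dcost V L + 1 /\ dcost V L <= dcost (V + 1) L + 1.
Proof.
  induction L as [|L IH]; intros V; [cbn [dcost]; lia|].
  destruct (Z.Even_or_Odd V) as [[u ->]|[u ->]].
  - rewrite dcost_double, dcost_double_add1. pose proof (IH u). lia.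
  - replace (2 * u + 1 + 1) with (2 * (u + 1)) by lia.
    rewrite dcost_double, dcost_double_add1. pose proof (IH u). lia.
Qed.

Lemma dcost_add_pow2 p : forall L V, (p <= L)%nat ->
  dcost (V + 2 ^ Z.of_nat p) L <= dcost V L + 1 /\
  dcost (V - 2 ^ Z.of_nat p) L <= dcost V L + 1.
Proof.
  induction p as [|p IH]; intros L V Hp.
  - pose proof (dcost_succ L V). pose proof (dcost_succ L (V - 1)).
    replace (V - 1 + 1) with V in * by lia. cbn. lia.
  - destruct L as [|L]; [lia|].
    rewrite Nat2Z.inj_succ, Z.pow_succ_r by lia.
    destruct (Z.Even_or_Odd V) as [[u ->]|[u ->]].
    + replace (2 * u + 2 * 2 ^ Z.of_nat p) with (2 * (u + 2 ^ Z.of_nat p)) by lia.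
      replace (2 * u - 2 * 2 ^ Z.of_nat p) with (2 * (u - 2 ^ Z.of_nat p)) by lia.
      rewrite !dcost_double. apply IH. lia.
    + replace (2 * u + 1 + 2 * 2 ^ Z.of_nat p) with (2 * (u + 2 ^ Z.of_nat p) + 1) by lia.
      replace (2 * u + 1 - 2 * 2 ^ Z.of_nat p) with (2 * (u - 2 ^ Z.of_nat p) + 1) by lia.
      rewrite !dcost_double_add1.
      replace (u + 2 ^ Z.of_nat p + 1) with (u + 1 + 2 ^ Z.of_nat p) by lia.
      replace (u - 2 ^ Z.of_nat p + 1) with (u + 1 - 2 ^ Z.of_nat p) by lia.
      pose proof (IH L u ltac:(lia)). pose proof (IH L (u + 1) ltac:(lia)). lia.
Qed.

Lemma dcost_S_le L : forall V, dcost V (S L) <= dcost V L.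
Proof.
  induction L as [|L IH]; intros V;
    destruct (Z.Even_or_Odd V) as [[u ->]|[u ->]].
  - rewrite dcost_double. cbn [dcost]. lia.
  - rewrite dcost_double_add1. cbn [dcost]. lia.
  - rewrite !dcost_double. apply IH.
  - rewrite !dcost_double_add1. pose proof (IH u). pose proof (IH (u + 1)). lia.
Qed.

(* Non-adjacent form: an optimal expansion of an odd integer can be chosen with
   its second digit zero. *)
Lemma dcost_odd_naf L u : exists y,
  (2 * u + 1 = 4 * y + 1 \/ 2 * u + 1 = 4 * y - 1) /\
  1 + dcost y L <= dcost (2 * u + 1) (S (S L)).
Proof.
  rewrite dcost_double_add1. destruct (Z.Even_or_Odd u) as [[y ->]|[y ->]].
  - exists y. split; [lia|].
    rewrite dcost_double, dcost_double_add1. pose proof (dcost_succ L y). lia.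
  - exists (y + 1). split; [lia|].
    replace (2 * y + 1 + 1) with (2 * (y + 1)) by lia.
    rewrite dcost_double, dcost_double_add1. pose proof (dcost_succ L y). lia.
Qed.

End DigitCost.

(** * Enumerating the integers of small digit cost *)

Section CheapIntegers.
Local Open Scope Z_scope.

Definition zinterval (k : nat) : list Z :=
  map (fun i => Z.of_nat i - Z.of_nat k) (seq 0 (2 * k + 1)).

Lemma in_zinterval k V : Z.abs V <= Z.of_nat k -> In V (zinterval k).
Proof.
  intros H. apply in_map_iff. exists (Z.to_nat (V + Z.of_nat k)).
  split; [lia|]. apply in_seq. lia.
Qed.

Lemma length_zinterval k : length (zinterval k) = (2 * k + 1)%nat.
Proof. unfold zinterval. rewrite length_map, length_seq. reflexivity. Qed.

Definition odd_neighbours (l : list Z) : list Z :=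
  flat_map (fun y => [2 * y + 1; 2 * y - 1]) l.

Lemma length_odd_neighbours l : length (odd_neighbours l) = (2 * length l)%nat.
Proof.
  induction l as [|y l IH]; [reflexivity|].
  change (odd_neighbours (y :: l)) with ([2 * y + 1; 2 * y - 1] ++ odd_neighbours l).
  rewrite length_app, IH. cbn [length]. lia.
Qed.

(* Odd elements are produced in the form [2 (2 z) ± 1] of [dcost_odd_naf]. *)
Fixpoint cheap (L k : nat) : list Z :=
  match L with
  | O => zinterval k
  | S L1 => map (Z.mul 2) (cheap L1 k) ++
      match k with
      | O => []
      | S k' => odd_neighbours
                  (match L1 with O => zinterval k' | S L2 => map (Z.mul 2) (cheap L2 k') end)
      end
  end.

Lemma cheap_SS L k : cheap (S (S L)) k =
  map (Z.mul 2) (cheap (S L) k) ++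
  match k with O => [] | S k' => odd_neighbours (map (Z.mul 2) (cheap L k')) end.
Proof. reflexivity. Qed.

Lemma cheap_complete_aux L :
  (forall V k, dcost V L <= Z.of_nat k -> In V (cheap L k)) /\
  (forall V k, dcost V (S L) <= Z.of_nat k -> In V (cheap (S L) k)).
Proof.
  induction L as [|L [IH1 IH2]].
  - split; [intros V k H; apply in_zinterval, H|].
    intros V k H. cbn [cheap]. apply in_or_app.
    destruct (Z.Even_or_Odd V) as [[u ->]|[u ->]].
    + rewrite dcost_double in H. left. apply in_map, in_zinterval, H.
    + rewrite dcost_double_add1 in H. cbn [dcost] in H.
      destruct k as [|k']; [lia|]. right. apply in_flat_map.
      destruct (Z.le_gt_cases (Z.abs u) (Z.of_nat k')).
      * exists u. split; [apply in_zinterval; lia|]. now left.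
      * exists (u + 1). split; [apply in_zinterval; lia|]. right. left. lia.
  - split; [exact IH2|]. intros V k H. rewrite cheap_SS. apply in_or_app.
    destruct (Z.Even_or_Odd V) as [[u ->]|[u ->]].
    + rewrite dcost_double in H. left. apply in_map, IH2, H.
    + destruct (dcost_odd_naf L u) as [y [Hy Hcost]].
      destruct k as [|k']; [pose proof (dcost_nonneg L y); lia|].
      right. apply in_flat_map. exists (2 * y). split.
      * apply in_map, IH1. lia.
      * cbn [In]. lia.
Qed.

Lemma cheap_complete L V k : dcost V L <= Z.of_nat k -> In V (cheap L k).
Proof. apply (proj1 (cheap_complete_aux L)). Qed.

Lemma length_cheap_SS L k : length (cheap (S (S L)) k) =
  (length (cheap (S L) k) + match k with O => 0 | S k' => 2 * length (cheap L k') end)%nat.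
Proof.
  rewrite cheap_SS, length_app, length_map. destruct k as [|k']; [reflexivity|].
  now rewrite length_odd_neighbours, length_map.
Qed.

Definition cost_list (n : nat) : list Z :=
  flat_map (fun L => if Nat.leb (2 * L) n then cheap L (n - 2 * L) else []) (seq 0 (S n)).

Lemma in_cost_list n L V : dcost V L + 2 * Z.of_nat L <= Z.of_nat n -> In V (cost_list n).
Proof.
  intros H. pose proof (dcost_nonneg L V). apply in_flat_map.
  exists L. split; [apply in_seq; lia|].
  replace (Nat.leb (2 * L) n) with true by (symmetry; apply Nat.leb_le; lia).
  apply cheap_complete. lia.
Qed.

End CheapIntegers.

Definition x_up : R := 13482 / 10000.

Lemma x_up_ge1 n : 1 <= x_up ^ n.
Proof. apply pow_R1_Rle. unfold x_up. lra. Qed.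

(* Since [x_up^5 >= x_up^3 + 2], the weights [x_up^(2L+k)] dominate the
   recursion [length_cheap_SS]. *)
Lemma length_cheap_le_aux L :
  (forall k, INR (length (cheap L k)) <= 4 * (INR k + 1) * x_up ^ (2 * L + k)) /\
  (forall k, INR (length (cheap (S L) k)) <= 4 * (INR k + 1) * x_up ^ (2 * S L + k)).
Proof.
  assert (Hpos : forall k, 0 <= INR k) by apply pos_INR.
  induction L as [|L [IH1 IH2]]; (split; [|intros k]).
  - intros k. cbn [cheap]. rewrite length_zinterval, plus_INR, mult_INR.
    pose proof (x_up_ge1 (2 * 0 + k)). pose proof (Hpos k). cbn [INR]. nra.
  - cbn [cheap]. rewrite length_app, length_map, length_zinterval.
    destruct k as [|k']; [cbn; unfold x_up; lra|].
    rewrite length_odd_neighbours, length_zinterval.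
    replace (2 * 1 + S k')%nat with (k' + 3)%nat by lia.
    replace (2 * S k' + 1 + 2 * (2 * k' + 1))%nat with (6 * k' + 5)%nat by lia.
    assert (Hlen : INR (6 * k' + 5) = 6 * INR k' + 5)
      by (rewrite plus_INR, mult_INR; cbn; ring).
    rewrite Hlen, pow_add, S_INR.
    pose proof (x_up_ge1 k'). pose proof (Hpos k').
    assert (x_up ^ 3 >= 2) by (unfold x_up; cbn; lra).
    assert (x_up ^ k' * x_up ^ 3 >= 2) by nra. nra.
  - exact IH2.
  - rewrite length_cheap_SS. destruct k as [|k'].
    + rewrite Nat.add_0_r. eapply Rle_trans; [apply IH2|].
      apply Rmult_le_compat_l; [cbn; lra|]. apply Rle_pow; [unfold x_up; lra|lia].
    + rewrite plus_INR, mult_INR. pose proof (IH2 (S k')). pose proof (IH1 k').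
      replace (2 * S L + S k')%nat with (2 * L + k' + 3)%nat in * by lia.
      replace (2 * S (S L) + S k')%nat with (2 * L + k' + 5)%nat by lia.
      rewrite pow_add in H |- *. change (INR 2) with 2. rewrite S_INR in *.
      pose proof (x_up_ge1 (2 * L + k')). pose proof (Hpos k').
      set (X := x_up ^ (2 * L + k')) in *.
      assert (x_up ^ 3 + 2 <= x_up ^ 5) by (unfold x_up; cbn; lra).
      assert (X * (x_up ^ 3 + 2) <= X * x_up ^ 5) by (apply Rmult_le_compat_l; lra).
      nra.
Qed.

Lemma length_flat_map_le {A B : Type} (f : A -> list B) (l : list A) (M : R) :
  (forall a, In a l -> INR (length (f a)) <= M) ->
  INR (length (flat_map f l)) <= INR (length l) * M.
Proof.
  induction l as [|a l IH]; intros H; cbn [flat_map length]; [cbn; lra|].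
  rewrite length_app, plus_INR, S_INR.
  pose proof (H a (or_introl eq_refl)).
  assert (INR (length (flat_map f l)) <= INR (length l) * M)
    by (apply IH; intros b Hb; apply H; now right).
  lra.
Qed.

Lemma length_cost_list_le n :
  INR (length (cost_list n)) <= 4 * (INR n + 1) ^ 2 * x_up ^ n.
Proof.
  pose proof (x_up_ge1 n). pose proof (pos_INR n).
  eapply Rle_trans; [apply (length_flat_map_le _ _ (4 * (INR n + 1) * x_up ^ n))|].
  - intros L _. destruct (Nat.leb (2 * L) n) eqn:HL; [|cbn; nra].
    apply Nat.leb_le in HL. eapply Rle_trans; [apply (proj1 (length_cheap_le_aux L))|].
    replace (2 * L + (n - 2 * L))%nat with n by lia.
    apply Rmult_le_compat_r; [lra|]. apply Rmult_le_compat_l; [lra|].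
    apply Rplus_le_compat_r, le_INR. lia.
  - rewrite length_seq, S_INR. nra.
Qed.

(** * Conjugacy classes inside Z[1/2] *)

Lemma powerRZ2_opp k : powerRZ 2 k * powerRZ 2 (- k) = 1.
Proof. rewrite <- powerRZ_add by lra. now rewrite Z.add_opp_diag_r. Qed.

Lemma powerRZ2_neg_nat p : powerRZ 2 (- Z.of_nat p) = / 2 ^ p.
Proof. rewrite powerRZ_neg', <- pow_powerRZ. reflexivity. Qed.

Lemma powerRZ2_cases k : exists a : nat, powerRZ 2 k = 2 ^ a \/ powerRZ 2 k = / 2 ^ a.
Proof.
  destruct k as [|p|p]; [exists 0%nat; now left|..];
    exists (Pos.to_nat p); [left|right]; reflexivity.
Qed.

Lemma dyadic_IZR V : dyadic (IZR V).
Proof. exists V, 0%nat. cbn. field. Qed.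

Lemma in_Z12_IZR V : in_Z12 (IZR V, 0%Z).
Proof. split; [apply dyadic_IZR|reflexivity]. Qed.

Lemma dyadic_powerRZ2_mul x k : dyadic x -> dyadic (powerRZ 2 k * x).
Proof.
  intros [m [j ->]]. destruct (powerRZ2_cases k) as [a [-> | ->]].
  - exists (m * 2 ^ Z.of_nat a)%Z, j. rewrite mult_IZR, <- pow_IZR. cbn.
    field. apply pow_nonzero. lra.
  - exists m, (j + a)%nat. rewrite pow_add. field. split; apply pow_nonzero; lra.
Qed.

Lemma bs_conj_Z12 x y k :
  bs_mul (bs_mul (y, k) (x, 0%Z)) (bs_inv (y, k)) = (powerRZ 2 k * x, 0%Z).
Proof.
  unfold bs_mul, bs_inv; cbn. f_equal; [|lia].
  rewrite Z.add_0_r. pose proof (powerRZ2_opp k) as Hinv.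
  transitivity (y + powerRZ 2 k * x - (powerRZ 2 k * powerRZ 2 (- k)) * y); [ring|].
  rewrite Hinv. ring.
Qed.

Lemma conjG_Z12_iff x g :
  dyadic x -> conjG (x, 0%Z) g <-> exists k, g = (powerRZ 2 k * x, 0%Z).
Proof.
  intros Hx. split.
  - intros [_ [[y k] [_ <-]]]. exists k. apply bs_conj_Z12.
  - intros [k ->]. split; [exact Hx|]. exists (0, k).
    split; [apply (dyadic_IZR 0)|apply bs_conj_Z12].
Qed.

Lemma in_Z12_inv g : in_Z12 g -> exists x, g = (x, 0%Z) /\ dyadic x.
Proof. destruct g as [x k]. intros [Hx Hk]. cbn in *. subst. now exists x. Qed.

Lemma in_Z12_conjG g g' : in_Z12 g -> conjG g g' -> in_Z12 g'.
Proof.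
  intros Hg H. destruct (in_Z12_inv g Hg) as [x [-> Hx]].
  apply conjG_Z12_iff in H as [k ->]; [|exact Hx].
  split; [apply dyadic_powerRZ2_mul, Hx|reflexivity].
Qed.

Lemma conjG_refl g : in_Z12 g -> conjG g g.
Proof.
  intros Hg. destruct (in_Z12_inv g Hg) as [x [-> Hx]].
  apply conjG_Z12_iff; [exact Hx|]. exists 0%Z. f_equal. cbn. ring.
Qed.

Lemma conjG_sym g g' : in_Z12 g -> conjG g g' -> conjG g' g.
Proof.
  intros Hg H. destruct (in_Z12_inv g Hg) as [x [-> Hx]].
  apply conjG_Z12_iff in H as [k ->]; [|exact Hx].
  apply conjG_Z12_iff; [apply dyadic_powerRZ2_mul, Hx|].
  exists (- k)%Z. f_equal. rewrite <- Rmult_assoc, (Rmult_comm (powerRZ 2 (- k))).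
  rewrite powerRZ2_opp. ring.
Qed.

Lemma conjG_trans g g' g'' : in_Z12 g -> conjG g g' -> conjG g' g'' -> conjG g g''.
Proof.
  intros Hg H1 H2. destruct (in_Z12_inv g Hg) as [x [-> Hx]].
  apply conjG_Z12_iff in H1 as [k ->]; [|exact Hx].
  apply conjG_Z12_iff in H2 as [j ->]; [|apply dyadic_powerRZ2_mul, Hx].
  apply conjG_Z12_iff; [exact Hx|]. exists (j + k)%Z.
  rewrite powerRZ_add by lra. f_equal. ring.
Qed.

Lemma conjG_IZR_div_pow V p : conjG (IZR V, 0%Z) (IZR V / 2 ^ p, 0%Z).
Proof.
  apply conjG_Z12_iff; [apply dyadic_IZR|]. exists (- Z.of_nat p)%Z.
  rewrite powerRZ2_neg_nat. f_equal. unfold Rdiv. ring.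
Qed.

(* [IZR V' = 2^k IZR V] with [V], [V'] odd forces [k = 0]. *)
Lemma odd_conjG_eq V V' : (V mod 2 = 1)%Z -> (V' mod 2 = 1)%Z ->
  conjG (IZR V, 0%Z) (IZR V', 0%Z) -> V = V'.
Proof.
  assert (Hpow : forall U U' a, (U mod 2 = 1)%Z -> (U' mod 2 = 1)%Z ->
            IZR U' = 2 ^ a * IZR U -> U = U').
  { intros U U' a HU HU' H. rewrite pow_IZR, <- mult_IZR in H. apply eq_IZR in H.
    destruct a as [|a]; [change (2 ^ Z.of_nat 0)%Z with 1%Z in H; lia|].
    rewrite Nat2Z.inj_succ, Z.pow_succ_r in H by lia.
    Z.div_mod_to_equations. lia. }
  intros HV HV' H. apply conjG_Z12_iff in H as [k Hk]; [|apply dyadic_IZR].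
  injection Hk as Hk. destruct (powerRZ2_cases k) as [a [Ha|Ha]]; rewrite Ha in Hk.
  - exact (Hpow V V' a HV HV' Hk).
  - symmetry. apply (Hpow V' V a HV' HV). rewrite Hk. field. apply pow_nonzero. lra.
Qed.

Lemma class_in_Z12_in_Z12 g : class_in_Z12 g -> in_Z12 g.
Proof.
  intros [Hg H]. apply H. split; [exact Hg|]. exists (0, 0%Z).
  split; [apply (dyadic_IZR 0)|]. destruct g as [x k].
  unfold bs_mul, bs_inv; cbn. f_equal; [ring|lia].
Qed.

Lemma class_in_Z12_conjG g g' n : class_in_Z12 g -> conjG g g' ->
  class_in_Z12 g' /\ (class_length_is g n -> class_length_is g' n).
Proof.
  intros Hc H. pose proof (class_in_Z12_in_Z12 g Hc) as Hg.
  assert (Hsame : forall h, conjG g' h <-> conjG g h).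
  { intros h. split; intros Hh.
    - exact (conjG_trans g g' h Hg H Hh).
    - exact (conjG_trans g' g h (in_Z12_conjG g g' Hg H) (conjG_sym g g' Hg H) Hh). }
  split.
  - split; [apply (in_Z12_conjG g g' Hg H)|]. intros h Hh. apply Hc, Hsame, Hh.
  - intros [[g1 [H1 H2]] Hmin]. split.
    + exists g1. split; [apply Hsame, H1|exact H2].
    + intros g2 m H3 H4. apply (Hmin g2 m); [apply Hsame, H3|exact H4].
Qed.

(** * Words in the generators *)

Lemma bs_mul_assoc g h k : bs_mul (bs_mul g h) k = bs_mul g (bs_mul h k).
Proof.
  destruct g as [x i], h as [y j], k as [z l]. unfold bs_mul; cbn. f_equal; [|lia].
  rewrite powerRZ_add by lra. ring.
Qed.

Lemma bs_mul_one_l g : bs_mul bs_one g = g.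
Proof. destruct g as [x k]. unfold bs_mul, bs_one; cbn. f_equal. ring. Qed.

Lemma eval_word_app w1 w2 : eval_word (w1 ++ w2) = bs_mul (eval_word w1) (eval_word w2).
Proof.
  induction w1 as [|s w1 IH]; cbn [app eval_word fold_right].
  - symmetry. apply bs_mul_one_l.
  - change (bs_mul s (eval_word (w1 ++ w2)) = bs_mul (bs_mul s (eval_word w1)) (eval_word w2)).
    rewrite IH. symmetry. apply bs_mul_assoc.
Qed.

Definition t_conj (w : list BS) : list BS := gen_t :: w ++ [bs_inv gen_t].

Lemma eval_word_t_conj w x :
  eval_word w = (x, 0%Z) -> eval_word (t_conj w) = (2 * x, 0%Z).
Proof.
  intros H. unfold t_conj. change (eval_word (gen_t :: ?u)) with (bs_mul gen_t (eval_word u)).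
  rewrite eval_word_app, H. unfold eval_word, fold_right, bs_mul, bs_inv, gen_t, bs_one; simpl.
  f_equal. field.
Qed.

Lemma in_ball_mono m n g : (m <= n)%nat -> in_ball m g -> in_ball n g.
Proof. intros Hmn [w [Hw1 Hw2]]. exists w. split; [lia|exact Hw2]. Qed.

Lemma in_ball_t_conj n x : in_ball n (x, 0%Z) -> in_ball (S (S n)) (2 * x, 0%Z).
Proof.
  intros [w [Hlen [Hgens Hw]]]. exists (t_conj w). split; [|split].
  - unfold t_conj. cbn [length]. rewrite length_app. cbn [length]. lia.
  - constructor; [cbn; tauto|]. apply Forall_app. split; [exact Hgens|].
    constructor; [cbn; tauto|constructor].
  - apply eval_word_t_conj, Hw.
Qed.

Lemma in_ball_a_mul n x (s : Z) : (s = 1 \/ s = -1)%Z ->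
  in_ball n (x, 0%Z) -> in_ball (S n) (IZR s + x, 0%Z).
Proof.
  intros Hs [w [Hlen [Hgens Hw]]].
  exists ((if Z.eqb s 1 then gen_a else bs_inv gen_a) :: w). split; [|split].
  - cbn. lia.
  - constructor; [|exact Hgens]. destruct (Z.eqb s 1); cbn; tauto.
  - change (eval_word (?a :: w)) with (bs_mul a (eval_word w)). rewrite Hw.
    destruct Hs as [-> | ->]; cbn; unfold bs_mul, bs_inv, gen_a; cbn; f_equal; ring.
Qed.

(* Invariant of a word of length [len] evaluating to [g = (V / 2^p, k)] whose
   partial [t]-exponents stay in [-p, q]: besides the [a^±1] letters of a depth
   [p + q] expansion of [V], it contains at least [2 (p + q) - |k|] letters [t^±1]. *)
Definition cost_witness (g : BS) (len : nat) : Prop :=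
  exists (p q : nat) (V : Z), fst g = IZR V / 2 ^ p /\
    (- Z.of_nat p <= snd g <= Z.of_nat q)%Z /\
    (dcost V (p + q) + 2 * Z.of_nat (p + q) <= Z.of_nat len + Z.abs (snd g))%Z.

Lemma cost_witness_one : cost_witness bs_one 0.
Proof. exists 0%nat, 0%nat, 0%Z. cbn. split; [field|lia]. Qed.

Lemma cost_witness_mul_a g len s : s = gen_a \/ s = bs_inv gen_a ->
  cost_witness g len -> cost_witness (bs_mul s g) (S len).
Proof.
  destruct g as [x k]. intros Hs [p [q [V [Hx [Hk Hcost]]]]]. cbn [fst snd] in *.
  assert (2 ^ p <> 0) by (apply pow_nonzero; lra).
  destruct (dcost_add_pow2 p (p + q) V ltac:(lia)) as [Hplus Hminus].
  destruct Hs as [-> | ->]; unfold bs_mul, bs_inv, gen_a.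
  - exists p, q, (V + 2 ^ Z.of_nat p)%Z. cbn [fst snd]. split; [|lia].
    rewrite Hx, plus_IZR, <- pow_IZR. simpl. field. auto.
  - exists p, q, (V - 2 ^ Z.of_nat p)%Z. cbn [fst snd]. split; [|lia].
    rewrite Hx, minus_IZR, <- pow_IZR. simpl. field. auto.
Qed.

Lemma cost_witness_mul_t g len : cost_witness g len -> cost_witness (bs_mul gen_t g) (S len).
Proof.
  destruct g as [x k]. intros [p [q [V [Hx [Hk Hcost]]]]]. cbn [fst snd] in *.
  unfold bs_mul, gen_t. destruct p as [|p].
  - exists 0%nat, (S q), (2 * V)%Z. cbn [fst snd]. split; [rewrite Hx, mult_IZR; simpl; field|].
    cbn [Nat.add] in *. rewrite dcost_double. lia.
  - exists p, (S q), V. cbn [fst snd]. split.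
    + rewrite Hx. simpl. field. apply pow_nonzero. lra.
    + replace (p + S q)%nat with (S p + q)%nat by lia. lia.
Qed.

Lemma cost_witness_mul_t_inv g len :
  cost_witness g len -> cost_witness (bs_mul (bs_inv gen_t) g) (S len).
Proof.
  destruct g as [x k]. intros [p [q [V [Hx [Hk Hcost]]]]]. cbn [fst snd] in *.
  unfold bs_mul, bs_inv, gen_t.
  assert (2 ^ p <> 0) by (apply pow_nonzero; lra).
  exists (S p). destruct q as [|q].
  - exists 0%nat, V. cbn [fst snd]. split; [rewrite Hx; simpl; field; auto|].
    pose proof (dcost_S_le (p + 0) V). replace (S p + 0)%nat with (S (p + 0)) by lia. lia.
  - exists q, V. cbn [fst snd]. split; [rewrite Hx; simpl; field; auto|].
    replace (S p + q)%nat with (p + S q)%nat by lia. lia.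
Qed.

Lemma word_cost_witness w :
  Forall (fun s => In s gens) w -> cost_witness (eval_word w) (length w).
Proof.
  induction w as [|s w IH]; intros Hw; [exact cost_witness_one|].
  inversion Hw as [|? ? Hs Hgens]; subst.
  change (eval_word (s :: w)) with (bs_mul s (eval_word w)).
  specialize (IH Hgens). cbn in Hs. destruct Hs as [<-|[<-|[<-|[<-|[]]]]].
  - apply cost_witness_mul_a; auto.
  - apply cost_witness_mul_a; auto.
  - apply cost_witness_mul_t, IH.
  - apply cost_witness_mul_t_inv, IH.
Qed.


Fixpoint words_upto (n : nat) : list (list BS) :=
  match n with
  | O => [[]]
  | S m => [] :: flat_map (fun s => map (cons s) (words_upto m)) gens
  end.

Lemma in_words_upto n w :
  (length w <= n)%nat -> Forall (fun s => In s gens) w -> In w (words_upto n).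
Proof.
  revert w. induction n as [|n IH]; intros w Hlen Hw.
  - destruct w; cbn in *; [auto|lia].
  - destruct w as [|s w]; [now left|]. right.
    inversion Hw; subst. apply in_flat_map. exists s. split; [assumption|].
    apply in_map, IH; [cbn in Hlen; lia|assumption].
Qed.

Fixpoint dedup_by {A : Type} (R : A -> A -> Prop) (l : list A) : list A :=
  match l with
  | [] => []
  | x :: l' => if excluded_middle_informative (exists y, In y (dedup_by R l') /\ R x y)
               then dedup_by R l' else x :: dedup_by R l'
  end.

Section DedupBy.
Variables (A : Type) (R : A -> A -> Prop).

Lemma dedup_by_incl l x : In x (dedup_by R l) -> In x l.
Proof.
  induction l as [|a l IH]; cbn; [tauto|].
  destruct (excluded_middle_informative _); cbn; intuition.
Qed.

Lemma dedup_by_cover l : (forall x, In x l -> R x x) ->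
  forall x, In x l -> exists y, In y (dedup_by R l) /\ R x y.
Proof.
  induction l as [|a l IH]; intros Hrefl x Hx; cbn in *; [tauto|].
  assert (IH' := IH (fun y Hy => Hrefl y (or_intror Hy))).
  destruct (excluded_middle_informative _) as [Hex|Hnex].
  - destruct Hx as [<-|Hx]; [exact Hex|exact (IH' x Hx)].
  - destruct Hx as [<-|Hx].
    + exists a. split; [now left|apply Hrefl; now left].
    + destruct (IH' x Hx) as [y [Hy1 Hy2]]. exists y. split; [now right|exact Hy2].
Qed.

Lemma dedup_by_nth_inj l d : (forall a b, In a l -> In b l -> R a b -> R b a) ->
  forall i j, (i < length (dedup_by R l))%nat -> (j < length (dedup_by R l))%nat ->
  R (nth i (dedup_by R l) d) (nth j (dedup_by R l) d) -> i = j.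
Proof.
  induction l as [|a l IH]; intros Hsym i j Hi Hj HR; cbn in *; [lia|].
  assert (IH' := IH (fun x y Hx Hy => Hsym x y (or_intror Hx) (or_intror Hy))).
  destruct (excluded_middle_informative _) as [Hex|Hnex]; [now apply IH'|].
  cbn in Hi, Hj. destruct i as [|i], j as [|j]; cbn in HR; [reflexivity|..].
  - exfalso. apply Hnex. exists (nth j (dedup_by R l) d).
    split; [apply nth_In; lia|exact HR].
  - exfalso. apply Hnex. exists (nth i (dedup_by R l) d).
    assert (Hin : In (nth i (dedup_by R l) d) (dedup_by R l)) by (apply nth_In; lia).
    split; [exact Hin|]. apply Hsym; [right; apply (dedup_by_incl l), Hin|now left|exact HR].
  - f_equal. apply IH'; [lia|lia|exact HR].
Qed.

End DedupBy.

Lemma is_c0_exists n : exists m, is_c0 n m.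
Proof.
  set (Q := fun g => class_in_Z12 g /\ class_length_is g n).
  set (cands := filter (fun g => if excluded_middle_informative (Q g) then true else false)
                       (map eval_word (words_upto n))).
  assert (Hcands : forall g, In g cands <-> In g (map eval_word (words_upto n)) /\ Q g).
  { intros g. unfold cands. rewrite filter_In.
    destruct (excluded_middle_informative (Q g)); intuition discriminate. }
  assert (HQ : forall g, In g cands -> Q g) by (intros g Hg; apply Hcands, Hg).
  assert (HZ : forall g, In g cands -> in_Z12 g)
    by (intros g Hg; apply class_in_Z12_in_Z12, HQ, Hg).
  set (reps := dedup_by conjG cands).
  exists (length reps), reps. split; [reflexivity|split; [|split]].
  - intros g Hg. apply HQ, (dedup_by_incl _ _ _ _ Hg).
  - apply dedup_by_nth_inj. intros a b Ha _ Hab. apply conjG_sym; [apply HZ, Ha|exact Hab].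
  - intros g Hc Hlen. destruct Hlen as [[g' [Hg' [w [Hw1 [Hw2 Hw3]]]]] Hmin].
    destruct (class_in_Z12_conjG g g' n Hc Hg') as [Hc' Hlen'].
    assert (Hin : In g' cands).
    { apply Hcands. split.
      - apply in_map_iff. exists w. split; [exact Hw3|apply in_words_upto; assumption].
      - split; [exact Hc'|]. apply Hlen'. split; [|exact Hmin].
        exists g'. split; [exact Hg'|]. exists w. auto. }
    destruct (dedup_by_cover _ conjG cands (fun x Hx => conjG_refl x (HZ x Hx)) g' Hin)
      as [r [Hr1 Hr2]].
    exists r. split; [exact Hr1|]. exact (conjG_trans g g' r (class_in_Z12_in_Z12 g Hc) Hg' Hr2).
Qed.

Lemma c0_spec n : is_c0 n (c0 n).
Proof. unfold c0. apply epsilon_spec, is_c0_exists. Qed.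


Lemma length_le_of_rel_inj {A B : Type} (dA : A) (dB : B) (l1 : list A) (l2 : list B)
  (Rel : A -> B -> Prop) :
  (forall a, In a l1 -> exists b, In b l2 /\ Rel a b) ->
  (forall i j b, (i < length l1)%nat -> (j < length l1)%nat ->
     Rel (nth i l1 dA) b -> Rel (nth j l1 dA) b -> i = j) ->
  (length l1 <= length l2)%nat.
Proof.
  intros Hcov Hinj.
  set (f := fun a => epsilon (inhabits dB) (fun b => In b l2 /\ Rel a b)).
  assert (Hf : forall a, In a l1 -> In (f a) l2 /\ Rel a (f a))
    by (intros a Ha; apply epsilon_spec, Hcov, Ha).
  rewrite <- (length_map f l1). apply NoDup_incl_length.
  - apply (proj2 (NoDup_nth (map f l1) (f dA))). rewrite length_map.
    intros i j Hi Hj. rewrite !map_nth. intros Hij.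
    apply (Hinj i j (f (nth i l1 dA)) Hi Hj).
    + apply Hf, nth_In, Hi.
    + rewrite Hij. apply Hf, nth_In, Hj.
  - intros b Hb. apply in_map_iff in Hb as [a [<- Ha]]. apply Hf, Ha.
Qed.

Lemma c0_le_length_cost_list n : (c0 n <= length (cost_list n))%nat.
Proof.
  destruct (c0_spec n) as [reps [Hlen [Hreps [Hinj _]]]]. rewrite <- Hlen.
  assert (HZ : forall r, In r reps -> in_Z12 r)
    by (intros r Hr; apply class_in_Z12_in_Z12, Hreps, Hr).
  apply (length_le_of_rel_inj bs_one 0%Z reps (cost_list n)
           (fun r V => conjG (IZR V, 0%Z) r)).
  - intros r Hr. destruct (Hreps r Hr) as [Hc [[g [Hg [w [Hw1 [Hw2 Hw3]]]]] _]].
    destruct (proj2 Hc g Hg) as [_ Hk].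
    destruct (word_cost_witness w Hw2) as [p [q [V [Hx [_ Hcost]]]]].
    rewrite Hw3 in Hx, Hcost. destruct g as [x k]. cbn [fst snd] in Hk, Hx, Hcost. subst.
    exists V. split.
    + apply (in_cost_list n (p + q)). lia.
    + apply (conjG_trans _ (IZR V / 2 ^ p, 0%Z)); [apply in_Z12_IZR|apply conjG_IZR_div_pow|].
      apply conjG_sym; [apply HZ, Hr|exact Hg].
  - intros i j V Hi Hj Hri Hrj. apply Hinj; [lia|lia|].
    apply (conjG_trans _ (IZR V, 0%Z)); [apply HZ, nth_In; lia| |exact Hrj].
    apply conjG_sym; [apply in_Z12_IZR|exact Hri].
Qed.

(** * A large family of short odd integers *)

Section OddFamily.
Local Open Scope Z_scope.

(* An odd [V] is written [V = sign4 V + 2 (half4 V)] with [half4 V] even, which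
   is the shape [a^±1 t w t^-1] of a word for [V]. *)
Definition sign4 (V : Z) : Z := if V mod 4 =? 1 then 1 else -1.
Definition half4 (V : Z) : Z := (V - sign4 V) / 2.
Definition lift_odd (V : Z) : Z := 2 * V - sign4 V.

Lemma odd_mod4_cases V : V mod 2 = 1 -> exists t,
  (V = 4 * t + 1 /\ sign4 V = 1) \/ (V = 4 * t + 3 /\ sign4 V = -1).
Proof.
  intros H. exists (V / 4). unfold sign4.
  destruct (Z.eqb_spec (V mod 4) 1) as [H4|H4]; [left|right];
    (split; [Z.div_mod_to_equations; lia|reflexivity]).
Qed.

Lemma sign4_4t_add1 t : sign4 (4 * t + 1) = 1.
Proof. unfold sign4. replace ((4 * t + 1) mod 4) with 1 by (Z.div_mod_to_equations; lia). reflexivity. Qed.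

Lemma sign4_4t_sub1 t : sign4 (4 * t - 1) = -1.
Proof. unfold sign4. replace ((4 * t - 1) mod 4) with 3 by (Z.div_mod_to_equations; lia). reflexivity. Qed.

Lemma half4_spec V : V mod 2 = 1 ->
  V = sign4 V + 2 * half4 V /\ (sign4 V = 1 \/ sign4 V = -1).
Proof.
  intros H. unfold half4. destruct (odd_mod4_cases V H) as [t [[-> ->]|[-> ->]]];
    split; try lia; Z.div_mod_to_equations; lia.
Qed.

Lemma lift_odd_cases V : V mod 2 = 1 -> exists t,
  (V = 4 * t + 1 /\ lift_odd V = 8 * t + 1) \/ (V = 4 * t + 3 /\ lift_odd V = 8 * t + 7).
Proof.
  intros H. unfold lift_odd. destruct (odd_mod4_cases V H) as [t [[-> ->]|[-> ->]]];
    exists t; lia.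
Qed.

Lemma half4_lift_odd V : V mod 2 = 1 -> half4 (lift_odd V) = 2 * half4 V.
Proof.
  intros H. destruct (lift_odd_cases V H) as [t [[-> ->]|[-> ->]]]; unfold half4.
  - replace (8 * t + 1) with (4 * (2 * t) + 1) by lia. rewrite !sign4_4t_add1.
    Z.div_mod_to_equations. lia.
  - replace (8 * t + 7) with (4 * (2 * t + 2) - 1) by lia.
    replace (4 * t + 3) with (4 * (t + 1) - 1) by lia. rewrite !sign4_4t_sub1.
    Z.div_mod_to_equations. lia.
Qed.

Lemma half4_4U_add1 U : half4 (4 * U + 1) = 2 * U.
Proof. unfold half4. rewrite sign4_4t_add1. Z.div_mod_to_equations. lia. Qed.

Lemma half4_4U_sub1 U : half4 (4 * U - 1) = 2 * U.
Proof. unfold half4. rewrite sign4_4t_sub1. Z.div_mod_to_equations. lia. Qed.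

(* [odd_family3 n] holds odd integers [V >= 3] such that [(half4 V, 0)] has
   length at most [n - 3]; its two recursive clauses cost 2 and 5 letters. *)
Fixpoint odd_family3 (n : nat) : list Z :=
  match n with
  | S (S n') => map lift_odd (odd_family3 n') ++
      match n' with
      | S (S (S m)) =>
          let F := (if Nat.leb 1 m then [1] else []) ++ odd_family3 m in
          map (fun U => 4 * U + 1) F ++ map (fun U => 4 * U - 1) F
      | _ => []
      end
  | _ => []
  end.

Definition odd_family (n : nat) : list Z :=
  (if Nat.leb 1 n then [1] else []) ++ odd_family3 n.

Lemma odd_family3_SS n : odd_family3 (S (S n)) = map lift_odd (odd_family3 n) ++
  match n with
  | S (S (S m)) => map (fun U => 4 * U + 1) (odd_family m) ++
                   map (fun U => 4 * U - 1) (odd_family m)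
  | _ => []
  end.
Proof. reflexivity. Qed.

Definition odd_ge3 (V : Z) : Prop := V mod 2 = 1 /\ 3 <= V.

Lemma odd_family_of_3 n :
  (forall V, In V (odd_family3 n) -> odd_ge3 V) -> NoDup (odd_family3 n) ->
  (forall V, In V (odd_family n) -> V mod 2 = 1 /\ 1 <= V) /\ NoDup (odd_family n).
Proof.
  intros Hodd Hnd. unfold odd_family. destruct (Nat.leb 1 n); cbn [app]; split.
  - intros V [<-|HV]; [split; reflexivity|]. destruct (Hodd V HV). lia.
  - constructor; [|exact Hnd]. intros H1. destruct (Hodd 1 H1). lia.
  - intros V HV. destruct (Hodd V HV). lia.
  - exact Hnd.
Qed.

Lemma odd_family3_spec n :
  (forall V, In V (odd_family3 n) -> odd_ge3 V) /\ NoDup (odd_family3 n).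
Proof.
  induction n as [n IH] using (well_founded_induction lt_wf).
  destruct n as [|[|n]]; [split; [contradiction|constructor]..|].
  rewrite odd_family3_SS. destruct (IH n ltac:(lia)) as [Hodd Hnd].
  assert (Hlift : forall V, In V (map lift_odd (odd_family3 n)) ->
            odd_ge3 V /\ (V mod 8 = 1 \/ V mod 8 = 7)).
  { intros V HV. apply in_map_iff in HV as [U [<- HU]]. destruct (Hodd U HU) as [HU1 HU2].
    destruct (lift_odd_cases U HU1) as [t [[-> ->]|[-> ->]]];
      unfold odd_ge3; Z.div_mod_to_equations; lia. }
  assert (Hnew : forall V, In V match n with
                   | S (S (S m)) => map (fun U => 4 * U + 1) (odd_family m) ++
                                    map (fun U => 4 * U - 1) (odd_family m)
                   | _ => [] end -> odd_ge3 V /\ (V mod 8 = 3 \/ V mod 8 = 5)).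
  { intros V HV. destruct n as [|[|[|m]]]; try contradiction.
    destruct (odd_family_of_3 m (proj1 (IH m ltac:(lia))) (proj2 (IH m ltac:(lia))))
      as [Hm _].
    apply in_app_iff in HV as [HV|HV]; apply in_map_iff in HV as [U [<- HU]];
      destruct (Hm U HU); unfold odd_ge3; Z.div_mod_to_equations; lia. }
  split.
  - intros V HV. apply in_app_iff in HV as [HV|HV]; [apply Hlift, HV|apply Hnew, HV].
  - apply NoDup_app.
    + apply NoDup_map_NoDup_ForallPairs; [|exact Hnd]. intros x y Hx Hy Hxy.
      destruct (lift_odd_cases x (proj1 (Hodd x Hx))) as [t [[-> E1]|[-> E1]]];
      destruct (lift_odd_cases y (proj1 (Hodd y Hy))) as [s [[-> E2]|[-> E2]]]; lia.
    + destruct n as [|[|[|m]]]; try constructor.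
      destruct (odd_family_of_3 m (proj1 (IH m ltac:(lia))) (proj2 (IH m ltac:(lia))))
        as [_ Hndm].
      apply NoDup_app.
      * apply NoDup_map_NoDup_ForallPairs; [intros x y _ _; lia|exact Hndm].
      * apply NoDup_map_NoDup_ForallPairs; [intros x y _ _; lia|exact Hndm].
      * intros a Ha1 Ha2. apply in_map_iff in Ha1 as [x [<- _]].
        apply in_map_iff in Ha2 as [y [Hy _]]. lia.
    + intros a Ha1 Ha2. destruct (Hlift a Ha1) as [_ H1]. destruct (Hnew a Ha2) as [_ H2]. lia.
Qed.

Lemma odd_family_spec n :
  (forall V, In V (odd_family n) -> V mod 2 = 1 /\ 1 <= V) /\ NoDup (odd_family n).
Proof. apply odd_family_of_3; apply odd_family3_spec. Qed.

Lemma length_odd_family_SS n : (1 <= n)%nat ->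
  length (odd_family (S (S n))) = (length (odd_family n) +
    match n with S (S (S m)) => 2 * length (odd_family m) | _ => 0 end)%nat.
Proof.
  intros Hn. unfold odd_family at 1 2.
  replace (Nat.leb 1 (S (S n))) with true by reflexivity.
  replace (Nat.leb 1 n) with true by (symmetry; apply Nat.leb_le, Hn).
  rewrite odd_family3_SS. cbn [app length]. rewrite length_app, length_map.
  destruct n as [|[|[|m]]]; [lia|cbn; lia|cbn; lia|].
  rewrite length_app, !length_map. lia.
Qed.

End OddFamily.

Lemma odd_family_realized_of_3 n :
  (forall V, In V (odd_family3 n) ->
     exists m, (m + 3 <= n)%nat /\ in_ball m (IZR (half4 V), 0%Z)) ->
  forall V, In V (odd_family n) -> in_ball n (IZR V, 0%Z).
Proof.
  intros H3 V HV. pose proof (proj1 (odd_family_spec n) V HV) as [Hodd _].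
  unfold odd_family in HV. apply in_app_iff in HV as [HV|HV].
  - destruct (Nat.leb 1 n) eqn:Hn; [|contradiction]. destruct HV as [<-|[]].
    apply Nat.leb_le in Hn. apply (in_ball_mono 1); [exact Hn|].
    replace (IZR 1) with (IZR 1 + 0) by ring. apply in_ball_a_mul; [now left|].
    exists []. split; [constructor|split; [constructor|reflexivity]].
  - destruct (H3 V HV) as [m [Hm Hball]]. destruct (half4_spec V Hodd) as [HV2 Hs].
    apply (in_ball_mono (S (S (S m)))); [lia|].
    rewrite HV2, plus_IZR, mult_IZR. apply in_ball_a_mul; [exact Hs|].
    apply in_ball_t_conj, Hball.
Qed.

Lemma odd_family3_realized n : forall V, In V (odd_family3 n) ->
  exists m, (m + 3 <= n)%nat /\ in_ball m (IZR (half4 V), 0%Z).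
Proof.
  induction n as [n IH] using (well_founded_induction lt_wf).
  destruct n as [|[|n]]; intros V HV; [contradiction..|].
  rewrite odd_family3_SS in HV. apply in_app_iff in HV as [HV|HV].
  - apply in_map_iff in HV as [U [<- HU]].
    destruct (IH n ltac:(lia) U HU) as [m [Hm Hball]]. exists (S (S m)). split; [lia|].
    rewrite half4_lift_odd by apply (proj1 (odd_family3_spec n) U HU).
    rewrite mult_IZR. apply in_ball_t_conj, Hball.
  - destruct n as [|[|[|m]]]; try contradiction.
    pose proof (odd_family_realized_of_3 m (IH m ltac:(lia))) as Hm.
    exists (S (S m)). split; [lia|].
    apply in_app_iff in HV as [HV|HV]; apply in_map_iff in HV as [U [<- HU]];
      [rewrite half4_4U_add1|rewrite half4_4U_sub1];
      rewrite mult_IZR; apply in_ball_t_conj, Hm, HU.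
Qed.

Lemma odd_family_realized n V : In V (odd_family n) -> in_ball n (IZR V, 0%Z).
Proof. apply odd_family_realized_of_3, odd_family3_realized. Qed.

Definition y_low : R := 13477 / 10000.

(* Works because [y_low^5 <= y_low^3 + 2], as read off [length_odd_family_SS]. *)
Lemma length_odd_family_ge n : (1 <= n)%nat ->
  y_low ^ n <= y_low ^ 5 * INR (length (odd_family n)).
Proof.
  induction n as [n IH] using (well_founded_induction lt_wf). intros Hn.
  assert (Hy1 : 1 <= y_low) by (unfold y_low; lra).
  destruct (le_lt_dec n 5) as [Hsmall|Hlarge].
  - assert (1 <= INR (length (odd_family n))).
    { unfold odd_family. replace (Nat.leb 1 n) with true by (symmetry; apply Nat.leb_le, Hn).
      cbn [app length]. rewrite S_INR. pose proof (pos_INR (length (odd_family3 n))). lra. }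
    assert (y_low ^ n <= y_low ^ 5) by (apply Rle_pow; auto).
    assert (0 <= y_low ^ 5) by (apply pow_le; lra). nra.
  - destruct n as [|[|[|[|[|m]]]]]; try lia.
    rewrite length_odd_family_SS by lia. cbn iota.
    pose proof (IH (S (S (S m))) ltac:(lia) ltac:(lia)) as H3.
    pose proof (IH m ltac:(lia) ltac:(lia)) as H0.
    rewrite plus_INR, mult_INR. change (INR 2) with 2.
    replace (y_low ^ S (S (S (S (S m))))) with (y_low ^ m * y_low ^ 5)
      by (rewrite <- pow_add; f_equal; lia).
    replace (y_low ^ S (S (S m))) with (y_low ^ m * y_low ^ 3) in H3
      by (rewrite <- pow_add; f_equal; lia).
    assert (y_low ^ 5 <= y_low ^ 3 + 2) by (unfold y_low; cbn; lra).
    assert (0 <= y_low ^ m) by (apply pow_le; lra).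
    assert (y_low ^ m * y_low ^ 5 <= y_low ^ m * y_low ^ 3 + 2 * y_low ^ m) by nra.
    lra.
Qed.

Fixpoint sum_upto (u : nat -> nat) (n : nat) : nat :=
  match n with O => u O | S m => (sum_upto u m + u (S m))%nat end.

Lemma class_in_Z12_IZR V : class_in_Z12 (IZR V, 0%Z).
Proof.
  split; [apply dyadic_IZR|]. intros g' Hg'. apply (in_Z12_conjG _ _ (in_Z12_IZR V) Hg').
Qed.

Lemma class_length_exists g n : in_Z12 g -> in_ball n g ->
  exists j, (j <= n)%nat /\ class_length_is g j.
Proof.
  intros Hg Hball.
  set (P := fun m => exists g', conjG g g' /\ in_ball m g').
  assert (HPn : P n) by (exists g; split; [apply conjG_refl, Hg|exact Hball]).
  assert (Hmin : forall m, P m -> exists j, P j /\ forall k, P k -> (j <= k)%nat).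
  { intros m. induction m as [m IH] using (well_founded_induction lt_wf). intros Hm.
    destruct (classic (exists k, (k < m)%nat /\ P k)) as [[k [Hk HPk]]|Hno].
    - exact (IH k Hk HPk).
    - exists m. split; [exact Hm|]. intros k Hk.
      destruct (le_lt_dec m k) as [Hle|Hlt]; [exact Hle|]. exfalso. eauto. }
  destruct (Hmin n HPn) as [j [HPj Hj]]. exists j. split; [exact (Hj n HPn)|].
  split; [exact HPj|]. intros g' m H1 H2. apply Hj. exists g'. auto.
Qed.

Lemma c0_reps_upto n : exists l : list BS, length l = sum_upto c0 n /\
  forall g j, class_in_Z12 g -> (j <= n)%nat -> class_length_is g j ->
  exists r, In r l /\ conjG g r.
Proof.
  induction n as [|n [l [Hl Hcov]]].
  - destruct (c0_spec 0) as [reps [Hlen [_ [_ Hreps]]]]. exists reps. split; [exact Hlen|].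
    intros g j Hg Hj Hgj. replace j with 0%nat in Hgj by lia. apply Hreps; assumption.
  - destruct (c0_spec (S n)) as [reps [Hlen [_ [_ Hreps]]]]. exists (l ++ reps).
    split; [rewrite length_app; cbn; lia|].
    intros g j Hg Hj Hgj. destruct (Nat.eq_dec j (S n)) as [->|Hne].
    + destruct (Hreps g Hg Hgj) as [r [Hr1 Hr2]]. exists r. split; [apply in_or_app; now right|exact Hr2].
    + destruct (Hcov g j Hg ltac:(lia) Hgj) as [r [Hr1 Hr2]].
      exists r. split; [apply in_or_app; now left|exact Hr2].
Qed.

Lemma length_odd_family_le_sum n : (length (odd_family n) <= sum_upto c0 n)%nat.
Proof.
  destruct (c0_reps_upto n) as [l [Hl Hcov]]. rewrite <- Hl.
  destruct (odd_family_spec n) as [Hodd Hnd].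
  apply (length_le_of_rel_inj 0%Z bs_one (odd_family n) l (fun V r => conjG (IZR V, 0%Z) r)).
  - intros V HV.
    destruct (class_length_exists (IZR V, 0%Z) n (in_Z12_IZR V) (odd_family_realized n V HV))
      as [j [Hj Hlen]].
    exact (Hcov _ j (class_in_Z12_IZR V) Hj Hlen).
  - intros i j r Hi Hj Hri Hrj. apply (proj1 (NoDup_nth _ 0%Z) Hnd i j Hi Hj).
    apply odd_conjG_eq; [apply Hodd, nth_In, Hi|apply Hodd, nth_In, Hj|].
    exact (conjG_trans _ r _ (in_Z12_IZR _) Hri (conjG_sym _ _ (in_Z12_IZR _) Hrj)).
Qed.

(** * From counts to growth rates *)

Definition nat_root (u : nat -> nat) (n : nat) : R :=
  if Nat.eqb (u n) 0 then 0 else Rpower (INR (u n)) (/ INR n).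

Lemma nat_root_le u n b : (1 <= n)%nat -> 0 < b ->
  INR (u n) <= b ^ n -> nat_root u n <= b.
Proof.
  intros Hn Hb H. unfold nat_root. destruct (Nat.eqb_spec (u n) 0) as [_|Hu]; [lra|].
  assert (0 < INR (u n)) by (apply lt_0_INR; lia).
  assert (0 < INR n) by (apply lt_0_INR; lia).
  eapply Rle_trans; [apply Rle_Rpower_l; [left; apply Rinv_0_lt_compat; lra|split; eauto]|].
  rewrite <- Rpower_pow, Rpower_mult, Rinv_r, Rpower_1 by lra. lra.
Qed.

Lemma nat_root_le_inv u n b : (1 <= n)%nat -> 0 < b ->
  nat_root u n <= b -> INR (u n) <= b ^ n.
Proof.
  intros Hn Hb H. unfold nat_root in H.
  destruct (Nat.eqb_spec (u n) 0) as [Hu|Hu]; [rewrite Hu; left; apply pow_lt, Hb|].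
  assert (0 < INR (u n)) by (apply lt_0_INR; lia).
  assert (0 < INR n) by (apply lt_0_INR; lia).
  replace (INR (u n)) with (Rpower (INR (u n)) (/ INR n) ^ n)
    by (rewrite <- Rpower_pow, Rpower_mult, Rinv_l, Rpower_1 by (lra || apply exp_pos);
        reflexivity).
  apply pow_incr. split; [left; apply exp_pos|exact H].
Qed.

Lemma poly_le_pow_eventually C d : 0 <= C -> 0 < d ->
  exists N, forall n, (N <= n)%nat -> C * (INR n + 1) ^ 2 <= (1 + d) ^ (3 * n).
Proof.
  intros HC Hd. set (rho := 1 + d).
  destruct (Pow_x_infinity rho ltac:(unfold rho; rewrite Rabs_pos_eq; lra) (4 * C / (d * d)))
    as [N HN].
  exists (S N). intros n Hn.
  assert (Hrho : 0 < rho ^ n) by (apply pow_lt; unfold rho; lra).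
  assert (Hbig : 4 * C / (d * d) <= rho ^ n)
    by (specialize (HN n ltac:(lia)); rewrite Rabs_pos_eq in HN; lra).
  assert (Hlin : (INR n + 1) * d <= 2 * rho ^ n).
  { pose proof (Rle_pow_lin d n ltac:(lra)) as Hb. change (1 + d) with rho in Hb.
    assert (1 <= INR n) by (apply (le_INR 1); lia). nra. }
  assert (Hsq : (INR n + 1) ^ 2 * (d * d) <= 4 * (rho ^ n * rho ^ n)).
  { pose proof (pos_INR n).
    replace ((INR n + 1) ^ 2 * (d * d)) with (((INR n + 1) * d) ^ 2) by ring.
    replace (4 * (rho ^ n * rho ^ n)) with ((2 * rho ^ n) ^ 2) by ring.
    apply pow_incr. nra. }
  replace (3 * n)%nat with (n + n + n)%nat by lia. rewrite !pow_add.
  apply (Rmult_le_reg_r (d * d)); [nra|].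
  apply Rle_trans with (C * (4 * (rho ^ n * rho ^ n))); [nra|].
  replace (C * (4 * (rho ^ n * rho ^ n))) with (4 * C / (d * d) * (rho ^ n * rho ^ n) * (d * d))
    by (field; lra).
  apply Rmult_le_compat_r; [nra|].
  replace (rho ^ n * rho ^ n * rho ^ n) with (rho ^ n * (rho ^ n * rho ^ n)) by ring.
  apply Rmult_le_compat_r; nra.
Qed.

Lemma LimSup_nat_root_le u C x d : 0 <= C -> 0 < x -> 0 < d ->
  (forall n, INR (u n) <= C * (INR n + 1) ^ 2 * x ^ n) ->
  Rbar_le (LimSup_seq (nat_root u)) ((1 + d) ^ 3 * x).
Proof.
  intros HC Hx Hd Hu. rewrite <- (LimSup_seq_const ((1 + d) ^ 3 * x)). apply LimSup_le.
  destruct (poly_le_pow_eventually C d HC Hd) as [N HN]. exists (S N). intros n Hn.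
  assert (0 < (1 + d) ^ 3) by (apply pow_lt; lra).
  apply nat_root_le; [lia|nra|]. eapply Rle_trans; [apply Hu|].
  rewrite Rpow_mult_distr, <- pow_mult.
  apply Rmult_le_compat_r; [apply pow_le; lra|]. apply HN. lia.
Qed.

Lemma LimSup_ge_of_frequently (v : nat -> R) z :
  (forall N, exists n, (N <= n)%nat /\ z <= v n) -> Rbar_le z (LimSup_seq v).
Proof.
  intros Hfreq. destruct (ex_LimSup_seq v) as [l Hl].
  rewrite (is_LimSup_seq_unique v l Hl). destruct l as [l| |]; cbn in Hl |- *; [|exact I|].
  - destruct (Rle_lt_dec z l) as [Hzl|Hlz]; [exact Hzl|exfalso].
    destruct (Hl (mkposreal (z - l) ltac:(lra))) as [_ [N HN]].
    destruct (Hfreq N) as [n [Hn Hz]]. specialize (HN n Hn). cbn in HN. lra.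
  - destruct (Hl z) as [N HN]. destruct (Hfreq N) as [n [Hn Hz]]. specialize (HN n Hn). lra.
Qed.

Lemma sum_upto_le_pow u z N : 1 < z ->
  (forall n, (N <= n)%nat -> INR (u n) <= z ^ n) ->
  exists D, forall n, (N <= n)%nat -> INR (sum_upto u n) <= D * z ^ n.
Proof.
  intros Hz Hu. set (S0 := INR (sum_upto u N)).
  assert (Hgeom : forall d, INR (sum_upto u (N + d)) <= S0 + z ^ S (N + d) / (z - 1)).
  { induction d as [|d IH].
    - rewrite Nat.add_0_r. assert (0 < z ^ S N / (z - 1)).
      { apply Rdiv_lt_0_compat; [apply pow_lt|]; lra. }
      unfold S0. lra.
    - rewrite Nat.add_succ_r. cbn [sum_upto]. rewrite plus_INR.
      pose proof (Hu (S (N + d)) ltac:(lia)).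
      replace (z ^ S (S (N + d)) / (z - 1)) with (z ^ S (N + d) / (z - 1) + z ^ S (N + d))
        by (cbn [pow]; field; lra).
      lra. }
  exists (S0 + z / (z - 1)). intros n Hn.
  replace n with (N + (n - N))%nat by lia. eapply Rle_trans; [apply Hgeom|].
  set (m := (N + (n - N))%nat).
  assert (1 <= z ^ m) by (apply pow_R1_Rle; lra).
  assert (0 <= S0) by apply pos_INR.
  assert (0 < z / (z - 1)) by (apply Rdiv_lt_0_compat; lra).
  replace (z ^ S m / (z - 1)) with (z / (z - 1) * z ^ m) by (cbn [pow]; field; lra).
  nra.
Qed.

Lemma LimSup_nat_root_ge u c y z : 0 < c -> 1 < z -> z < y ->
  (forall n, (1 <= n)%nat -> c * y ^ n <= INR (sum_upto u n)) ->
  Rbar_le z (LimSup_seq (nat_root u)).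
Proof.
  intros Hc Hz Hzy Hsum. apply LimSup_ge_of_frequently. intros N. apply NNPP. intros Hno.
  assert (Hev : forall n, (S N <= n)%nat -> INR (u n) <= z ^ n).
  { intros n Hn. apply nat_root_le_inv; [lia|lra|].
    destruct (Rle_lt_dec (nat_root u n) z) as [H|H]; [exact H|].
    exfalso. apply Hno. exists n. split; [lia|lra]. }
  destruct (sum_upto_le_pow u z (S N) Hz Hev) as [D HD].
  assert (Hyz : Rabs (y / z) > 1).
  { rewrite Rabs_pos_eq by (apply Rlt_le, Rdiv_lt_0_compat; lra).
    apply Rlt_gt, (Rmult_lt_reg_r z); [lra|]. field_simplify; lra. }
  destruct (Pow_x_infinity (y / z) Hyz (D / c + 1)) as [M HM].
  set (n := Nat.max M (S N)).
  specialize (HM n ltac:(lia)). specialize (HD n ltac:(lia)). specialize (Hsum n ltac:(lia)).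
  assert (Hzn : 0 < z ^ n) by (apply pow_lt; lra).
  rewrite Rabs_pos_eq in HM by (apply pow_le, Rlt_le, Rdiv_lt_0_compat; lra).
  unfold Rdiv in HM. rewrite Rpow_mult_distr, pow_inv in HM.
  assert (y ^ n <= D / c * z ^ n).
  { apply (Rmult_le_reg_l c); [exact Hc|].
    replace (c * (D / c * z ^ n)) with (D * z ^ n) by (field; lra). lra. }
  assert (y ^ n * / z ^ n <= D / c).
  { apply (Rmult_le_reg_r (z ^ n)); [exact Hzn|].
    replace (y ^ n * / z ^ n * z ^ n) with (y ^ n) by (field; lra). exact H. }
  lra.
Qed.


Lemma c0_le_poly_pow n : INR (c0 n) <= 4 * (INR n + 1) ^ 2 * x_up ^ n.
Proof. eapply Rle_trans; [apply le_INR, c0_le_length_cost_list|apply length_cost_list_le]. Qed.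

Lemma pow_le_sum_c0 n : (1 <= n)%nat -> / y_low ^ 5 * y_low ^ n <= INR (sum_upto c0 n).
Proof.
  intros Hn. assert (0 < y_low ^ 5) by (apply pow_lt; unfold y_low; lra).
  eapply Rle_trans; [|apply le_INR, length_odd_family_le_sum].
  apply (Rmult_le_reg_l (y_low ^ 5)); [assumption|].
  rewrite <- Rmult_assoc, Rinv_r, Rmult_1_l by lra. apply length_odd_family_ge, Hn.
Qed.

Theorem corollary3p10 :
  Rbar_le (Finite (13475 / 10000)) c0_growth_rate /\
  Rbar_le c0_growth_rate (Finite (13485 / 10000)).
Proof.
  change c0_growth_rate with (LimSup_seq (nat_root c0)). split.
  - apply (LimSup_nat_root_ge c0 (/ y_low ^ 5) y_low).
    + apply Rinv_0_lt_compat, pow_lt. unfold y_low. lra.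
    + lra.
    + unfold y_low. lra.
    + exact pow_le_sum_c0.
  - eapply Rbar_le_trans; [apply (LimSup_nat_root_le c0 4 x_up (7 / 100000))|].
    + lra.
    + unfold x_up. lra.
    + lra.
    + exact c0_le_poly_pow.
    + cbn. unfold x_up. lra.
Qed.
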